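(* Let $d\geq 2$ and $n_1,\dots,n_d\geq 1$ be integers and let $G_1,G_2$ be graphs. Then $K_{n_1,\dots,n_d}$ is isomorphic to a subgraph of $G_1\boxtimes G_2$ if and only if there exist non-negative integers $a_1,\dots,a_d,b_1,\dots,b_d,z_1,\dots,z_d,x,y$ such that: (i) $K_{a_1,\dots,a_d,\overline{x}}$ is isomorphic to a subgraph of $G_1$; (ii) $K_{b_1,\dots,b_d,\overline{y}}$ is isomorphic to a subgraph of $G_2$; (iii) $n_j \leq a_jb_j+a_jy+b_jx+z_j$ for all $j\in\{1,\dots,d\}$; and (iv) $z_1+\dots+z_d\leq xy$.
   Context: The strong product $G_1 \boxtimes G_2$ has vertex set $V(G_1)\times V(G_2)$, with distinct vertices $(a,v),(b,u)$ adjacent iff ($a=b$ or $ab\in E(G_1)$) and ($u=v$ or $uv\in E(G_2)$). For non-negative integers $a_1,\dots,a_d,x$, the graph $K_{a_1,\dots,a_d,\overline{x}}$ has vertex set $A_1\cup\dots\cup A_d\cup X$, a disjoint union with $|A_j|=a_j$ and $|X|=x$, in which two distinct vertices are adjacent iff they lie in different sets among $A_1,\dots,A_d,X$ or both lie in $X$ (so $X$ is a clique, each $A_j$ is independent, and parts may be empty). $K_{n_1,\dots,n_d}$ denotes the complete $d$-partite graph with parts of sizes $n_1,\dots,n_d$. *)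

From mathcomp Require Import all_boot.
Set Implicit Arguments. Unset Strict Implicit. Unset Printing Implicit Defensive.

Definition simple_graph (T : finType) (e : rel T) : Prop :=
  symmetric e /\ irreflexive e.

Definition subgraph_iso (S : finType) (f : rel S) (T : finType) (e : rel T) : Prop :=
  exists h : S -> T, injective h /\ forall u v, f u v -> e (h u) (h v).

Definition strong_prod (T1 T2 : finType) (e1 : rel T1) (e2 : rel T2) : rel (T1 * T2) :=
  fun p q => [&& p != q, (p.1 == q.1) || e1 p.1 q.1 & (p.2 == q.2) || e2 p.2 q.2].

Definition parts_vtx (d : nat) (a : 'I_d -> nat) : finType := {j : 'I_d & 'I_(a j)}.

Definition Kmp_adj (d : nat) (n : 'I_d -> nat) : rel (parts_vtx n) :=
  fun u v => tag u != tag v.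

(* K_{a_1,...,a_d, xbar}: parts A_1..A_d (independent) plus a clique X of size x,
   adjacent to everything else. *)
Definition Kmpx_vtx (d : nat) (a : 'I_d -> nat) (x : nat) : finType :=
  (parts_vtx a + 'I_x)%type.

Definition Kmpx_adj (d : nat) (a : 'I_d -> nat) (x : nat) : rel (Kmpx_vtx a x) :=
  fun u v => match u, v with
  | inl u', inl v' => tag u' != tag v'
  | inr i, inr i' => i != i'
  | _, _ => true
  end.

From mathcomp Require Import all_boot.
Set Implicit Arguments. Unset Strict Implicit. Unset Printing Implicit Defensive.

(* Only if: compose an embedding of K_n with the two projections.  In G_1 the
   images of distinct parts are pairwise equal-or-adjacent, so the vertices hit
   by two parts form a clique X adjacent to every other image vertex, and the
   remaining images A_j of the parts give K_{a,xbar} with a_j = |A_j|.  Part j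
   then lands in (A_j + X) * (B_j + Y); its vertices landing in X * Y are z_j,
   and these are distinct over all j, so sum z_j <= xy.
   If: place part j on A_j * B_j, A_j * Y, X * B_j and on z_j private cells of
   X * Y; vertices of distinct parts then differ and are equal-or-adjacent in
   each coordinate, i.e. adjacent in the strong product. *)

Definition joined (T : finType) (e : rel T) : rel T := fun u v => (u == v) || e u v.

Lemma strong_prodE (T1 T2 : finType) (e1 : rel T1) (e2 : rel T2) p q :
  strong_prod e1 e2 p q = [&& p != q, joined e1 p.1 q.1 & joined e2 p.2 q.2].
Proof. by []. Qed.

Lemma joined_hom (S T : finType) (f : rel S) (e : rel T) (h : S -> T) u v :
  (forall u v, f u v -> e (h u) (h v)) -> joined f u v -> joined e (h u) (h v).
Proof. by rewrite /joined => hom /orP[/eqP->|/hom->]; rewrite ?eqxx ?orbT. Qed.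

Lemma subgraph_iso_trans (R S T : finType) (g : rel R) (f : rel S) (e : rel T) :
  subgraph_iso g f -> subgraph_iso f e -> subgraph_iso g e.
Proof.
case=> h1 [inj1 hom1] [h2 [inj2 hom2]].
by exists (h2 \o h1); split=> [|u v /hom1/hom2]; first exact: inj_comp.
Qed.

Lemma strong_prod_subgraph_iso (S1 T1 S2 T2 : finType)
    (f1 : rel S1) (e1 : rel T1) (f2 : rel S2) (e2 : rel T2) :
  subgraph_iso f1 e1 -> subgraph_iso f2 e2 ->
  subgraph_iso (strong_prod f1 f2) (strong_prod e1 e2).
Proof.
case=> h1 [inj1 hom1] [h2 [inj2 hom2]].
pose h p := (h1 p.1, h2 p.2).
have inj_h : injective h by move=> [? ?] [? ?] [/inj1-> /inj2->].
exists h; split=> // p q; rewrite !strong_prodE (inj_eq inj_h) => /and3P[-> pq1 pq2].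
by rewrite (joined_hom hom1 pq1) (joined_hom hom2 pq2).
Qed.

Definition card_le_embed (S U : finType) (le_SU : #|S| <= #|U|) (s : S) : U :=
  enum_val (widen_ord le_SU (enum_rank s)).

Lemma card_le_embed_inj (S U : finType) (le_SU : #|S| <= #|U|) :
  injective (card_le_embed le_SU).
Proof.
move=> s t /enum_val_inj /(congr1 val) /= eq_st.
by apply: enum_rank_inj; apply: val_inj.
Qed.

Lemma card_preimset_le (aT rT : finType) (f : aT -> rT) (A : {set rT}) :
  injective f -> #|f @^-1: A| <= #|A|.
Proof.
move=> inj_f; rewrite -(card_imset _ inj_f); apply: subset_leq_card.
by apply/subsetP => _ /imsetP[u + ->]; rewrite inE.
Qed.

Lemma card_tagged_sum (d : nat) (a : 'I_d -> nat) : #|parts_vtx a| = \sum_(j < d) a j.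
Proof.
rewrite (card_tagged (fun j => 'I_(a j))) sumnE big_map big_enum /=.
by apply: eq_bigr => j _; rewrite card_ord.
Qed.

Definition part (d : nat) (n : 'I_d -> nat) (j : 'I_d) : {set parts_vtx n} :=
  [set u | tag u == j].

Lemma card_part (d : nat) (n : 'I_d -> nat) j : #|part n j| = n j.
Proof.
have inj_t : injective (Tagged (fun j => 'I_(n j)) (i:=j)).
  by move=> i i'; apply: eq_from_Tagged.
rewrite -[n j]card_ord -cardsT -(card_imset _ inj_t); apply: eq_card => -[k i].
rewrite !inE /=; apply/eqP/imsetP => [jk|[i' _ /(congr1 tag)/= ->]] //.
by subst k; exists i.
Qed.

Lemma sum_card_part (d : nat) (n : 'I_d -> nat) (A : {set parts_vtx n}) :
  \sum_(j < d) #|part n j :&: A| = #|A|.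
Proof.
rewrite -sum1_card (partition_big (fun u : parts_vtx n => tag u) predT) //=.
by apply: eq_bigr => j _; rewrite -sum1_card; apply: eq_bigl => u; rewrite !inE andbC.
Qed.

Definition Kmpx_part (d : nat) (a : 'I_d -> nat) (x : nat) (w : Kmpx_vtx a x) : option 'I_d :=
  if w is inl u then Some (tag u) else None.

Lemma Kmpx_joined (d : nat) (a : 'I_d -> nat) (x : nat) (u v : Kmpx_vtx a x) :
  (forall j, Kmpx_part u = Some j -> Kmpx_part v != Some j) ->
  joined (@Kmpx_adj d a x) u v.
Proof.
rewrite /joined; case: u => [u|i]; case: v => [v|i'] //= disj; last first.
  by case: (eqVneq i i') => [->|]; rewrite ?eqxx ?orbT.
by apply/orP; right; apply: contra (disj _ erefl) => /eqP->.
Qed.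

Section KmpInStrongProduct.
Variables (d : nat) (n a b z : 'I_d -> nat) (x y : nat).
Hypothesis n_le : forall j, n j <= a j * b j + a j * y + b j * x + z j.
Hypothesis sum_z_le : \sum_(j < d) z j <= x * y.

Definition slot (j : 'I_d) : finType :=
  ('I_(a j) * 'I_(b j) + 'I_(a j) * 'I_y + 'I_x * 'I_(b j) + 'I_(z j))%type.

Lemma card_slot j : #|'I_(n j)| <= #|slot j|.
Proof. by rewrite !card_sum !card_prod !card_ord (mulnC x). Qed.

Lemma card_Z : #|parts_vtx z| <= #|{: 'I_x * 'I_y}|.
Proof. by rewrite card_tagged_sum card_prod !card_ord. Qed.

Let Zcell : parts_vtx z -> 'I_x * 'I_y := card_le_embed card_Z.

Definition slot_vtx j (s : slot j) : Kmpx_vtx a x * Kmpx_vtx b y :=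
  match s with
  | inl (inl (inl (s1, s2))) =>
      (inl (Tagged (fun j => 'I_(a j)) s1), inl (Tagged (fun j => 'I_(b j)) s2))
  | inl (inl (inr (s1, s2))) => (inl (Tagged (fun j => 'I_(a j)) s1), inr s2)
  | inl (inr (s1, s2)) => (inr s1, inl (Tagged (fun j => 'I_(b j)) s2))
  | inr i => let c := Zcell (Tagged (fun j => 'I_(z j)) i) in (inr c.1, inr c.2)
  end.

Lemma slot_vtx_inj j k (s : slot j) (t : slot k) :
  slot_vtx s = slot_vtx t -> Tagged slot s = Tagged slot t.
Proof.
case: s => [[[[s1 s2]|[s1 s2]]|[s1 s2]]|i];
case: t => [[[[t1 t2]|[t1 t2]]|[t1 t2]]|i'] //=.
- case=> jk; subst k => eq1 _ eq2.
  by rewrite (eq_from_Tagged eq1) (eq_from_Tagged eq2).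
- by case=> jk; subst k => eq1 ->; rewrite (eq_from_Tagged eq1).
- by case=> -> jk; subst k => eq2; rewrite (eq_from_Tagged eq2).
- move=> eq_c.
  have /card_le_embed_inj eq_i :
      Zcell (Tagged (fun j => 'I_(z j)) i) = Zcell (Tagged (fun j => 'I_(z j)) i').
    by move: (Zcell _) (Zcell _) eq_c => [? ?] [? ?] [-> ->].
  by move: (eq_i) => /(congr1 tag)/= jk; subst k; rewrite (eq_from_Tagged eq_i).
Qed.

Lemma slot_vtx_part j (s : slot j) k :
  Kmpx_part (slot_vtx s).1 = Some k \/ Kmpx_part (slot_vtx s).2 = Some k -> k = j.
Proof. by case: s => [[[[? ?]|[? ?]]|[? ?]]|?] /= [] // [<-]. Qed.

Lemma slot_vtx_joined j k (s : slot j) (t : slot k) : j != k ->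
  joined (@Kmpx_adj d a x) (slot_vtx s).1 (slot_vtx t).1 /\
  joined (@Kmpx_adj d b y) (slot_vtx s).2 (slot_vtx t).2.
Proof.
move=> jk; split; apply: Kmpx_joined => c cs; apply: contra jk => /eqP ct.
- by rewrite -(slot_vtx_part (or_introl cs)) (slot_vtx_part (or_introl ct)).
- by rewrite -(slot_vtx_part (or_intror cs)) (slot_vtx_part (or_intror ct)).
Qed.

Definition slot_of (u : parts_vtx n) : slot (tag u) :=
  card_le_embed (card_slot (tag u)) (tagged u).

Definition Kmp_strong_embed (u : parts_vtx n) : Kmpx_vtx a x * Kmpx_vtx b y :=
  slot_vtx (slot_of u).

Lemma Kmp_strong_embed_inj : injective Kmp_strong_embed.
Proof.
move=> [j i] [k i'] /slot_vtx_inj; rewrite /slot_of /= => eq_s.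
move: (eq_s) => /(congr1 tag)/= jk; subst k.
by rewrite (card_le_embed_inj (eq_from_Tagged eq_s)).
Qed.

Lemma Kmp_strong_embed_adj u v :
  Kmp_adj u v -> strong_prod (@Kmpx_adj d a x) (@Kmpx_adj d b y)
                   (Kmp_strong_embed u) (Kmp_strong_embed v).
Proof.
move=> uv; rewrite strong_prodE (inj_eq Kmp_strong_embed_inj).
have -> /= : u != v by apply: contraNneq uv => ->; rewrite /Kmp_adj eqxx.
by have [-> ->] := slot_vtx_joined (slot_of u) (slot_of v) uv.
Qed.

Lemma Kmp_sub_strong_prod_Kmpx :
  subgraph_iso (@Kmp_adj d n) (strong_prod (@Kmpx_adj d a x) (@Kmpx_adj d b y)).
Proof.
exists Kmp_strong_embed; split; [exact: Kmp_strong_embed_inj | exact: Kmp_strong_embed_adj].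
Qed.

End KmpInStrongProduct.

Section KmpxFromProjection.
Variables (d : nat) (n : 'I_d -> nat) (T : finType) (e : rel T) (pi : parts_vtx n -> T).
Hypothesis pi_joined : forall u v, tag u != tag v -> joined e (pi u) (pi v).

Definition part_img j : {set T} := pi @: part n j.
Definition shared_img : {set T} :=
  [set v | [exists j, exists k, [&& j != k, v \in part_img j & v \in part_img k]]].
Definition own_img j : {set T} := part_img j :\: shared_img.

Lemma part_img_joined j k v w :
  j != k -> v \in part_img j -> w \in part_img k -> joined e v w.
Proof.
move=> jk /imsetP[u + ->] /imsetP[u' + ->]; rewrite !inE => /eqP uj /eqP u'k.
by apply: pi_joined; rewrite uj u'k.
Qed.

Lemma shared_imgP v :
  reflect (exists j k, [/\ j != k, v \in part_img j & v \in part_img k]) (v \in shared_img).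
Proof.
rewrite inE; apply: (iffP existsP) => [[j /existsP[k /and3P[]]]|[j [k [jk vj vk]]]].
  by exists j, k.
by exists j; apply/existsP; exists k; rewrite jk vj vk.
Qed.

Lemma shared_img_joined v w l :
  v \in shared_img -> w \in part_img l -> joined e v w /\ joined e w v.
Proof.
case/shared_imgP=> j [k [jk vj vk]] wl.
wlog jl : j k jk vj vk / j != l.
  move=> joined_jl; have [jl|] := eqVneq j l; last exact: joined_jl jk vj vk.
  by subst l; apply: (joined_jl k j _ vk vj); rewrite eq_sym.
have lj : l != j by rewrite eq_sym.
by rewrite (part_img_joined jl vj wl) (part_img_joined lj wl vj).
Qed.

Lemma own_imgP j v : reflect (v \notin shared_img /\ v \in part_img j) (v \in own_img j).
Proof. by rewrite in_setD; apply: andP. Qed.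

Lemma shared_img_part v : v \in shared_img -> exists l, v \in part_img l.
Proof. by case/shared_imgP=> j [_ [_ vj _]]; exists j. Qed.

Lemma own_img_disjoint j k v : j != k -> v \in own_img j -> v \notin own_img k.
Proof.
move=> jk /own_imgP[vX vj]; apply: contra vX => /own_imgP[_ vk].
by apply/shared_imgP; exists j, k.
Qed.

Definition Kmpx_proj_embed (w : Kmpx_vtx (fun j => #|own_img j|) #|shared_img|) : T :=
  match w with
  | inl u => @enum_val T (own_img (tag u)) (tagged u)
  | inr i => @enum_val T shared_img i
  end.

Lemma Kmpx_proj_embed_own u : Kmpx_proj_embed (inl u) \in own_img (tag u).
Proof. exact: enum_valP. Qed.

Lemma Kmpx_proj_embed_shared i : Kmpx_proj_embed (inr i) \in shared_img.
Proof. exact: enum_valP. Qed.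

Lemma Kmpx_proj_embed_inj : injective Kmpx_proj_embed.
Proof.
have own_shared u i : Kmpx_proj_embed (inl u) != Kmpx_proj_embed (inr i).
  apply: contraTneq (Kmpx_proj_embed_shared i) => <-.
  by have /own_imgP[] := Kmpx_proj_embed_own u.
move=> [u|i] [v|i'] eq_vtx.
- have [uv|uv] := eqVneq (tag u) (tag v); last first.
    by have := own_img_disjoint uv (Kmpx_proj_embed_own u);
       rewrite eq_vtx Kmpx_proj_embed_own.
  by case: u v uv eq_vtx => [j s] [k t] /= jk; subst k => /enum_val_inj ->.
- by have := own_shared u i'; rewrite eq_vtx eqxx.
- by have := own_shared v i; rewrite eq_vtx eqxx.
- by rewrite (enum_val_inj eq_vtx).
Qed.

Lemma Kmpx_proj_embed_adj u v :
  Kmpx_adj u v -> e (Kmpx_proj_embed u) (Kmpx_proj_embed v).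
Proof.
move=> uv; have neq : Kmpx_proj_embed u != Kmpx_proj_embed v.
  rewrite (inj_eq Kmpx_proj_embed_inj); apply: contraTneq uv => ->.
  by case: v => [v|i] /=; rewrite eqxx.
suff : joined e (Kmpx_proj_embed u) (Kmpx_proj_embed v) by rewrite /joined (negbTE neq).
case: u v uv neq => [u|i] [v|i'] uv _.
- have /own_imgP[_ uj] := Kmpx_proj_embed_own u.
  have /own_imgP[_ vk] := Kmpx_proj_embed_own v.
  exact: part_img_joined uv uj vk.
- have /own_imgP[_ uj] := Kmpx_proj_embed_own u.
  by have [] := shared_img_joined (Kmpx_proj_embed_shared i') uj.
- have /own_imgP[_ vk] := Kmpx_proj_embed_own v.
  by have [] := shared_img_joined (Kmpx_proj_embed_shared i) vk.
- have [l il] := shared_img_part (Kmpx_proj_embed_shared i').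
  by have [] := shared_img_joined (Kmpx_proj_embed_shared i) il.
Qed.

Lemma Kmpx_sub_projection :
  subgraph_iso (@Kmpx_adj d (fun j => #|own_img j|) #|shared_img|) e.
Proof.
by exists Kmpx_proj_embed; split; [exact: Kmpx_proj_embed_inj | exact: Kmpx_proj_embed_adj].
Qed.

Lemma proj_mem u : pi u \in own_img (tag u) :|: shared_img.
Proof.
have pi_u : pi u \in part_img (tag u) by apply: imset_f; rewrite inE.
by rewrite !inE pi_u andbT orNb.
Qed.

End KmpxFromProjection.

Lemma card_setXU_corner (T1 T2 : finType) (A1 D1 : {set T1}) (A2 D2 : {set T2}) :
  #|setX (A1 :|: D1) (A2 :|: D2) :\: setX D1 D2|
    <= #|A1| * #|A2| + #|A1| * #|D2| + #|A2| * #|D1|.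
Proof.
apply: (@leq_trans #|setX A1 A2 :|: setX A1 D2 :|: setX D1 A2|).
  apply: subset_leq_card; apply/subsetP => -[p1 p2]; rewrite !inE /=.
  by case: (p1 \in A1); case: (p1 \in D1); case: (p2 \in A2); case: (p2 \in D2).
rewrite (mulnC #|A2|) -!cardsX.
apply: leq_trans (leq_card_setU _ _).1 _; rewrite leq_add2r.
exact: (leq_card_setU _ _).1.
Qed.

Section CornerCount.
Variables (d : nat) (n : 'I_d -> nat) (T1 T2 : finType) (h : parts_vtx n -> T1 * T2).
Hypothesis h_inj : injective h.
Variables (B1 : 'I_d -> {set T1}) (C1 : {set T1}) (B2 : 'I_d -> {set T2}) (C2 : {set T2}).
Hypothesis h_mem : forall u, h u \in setX (B1 (tag u) :|: C1) (B2 (tag u) :|: C2).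

Definition corner_count j := #|part n j :&: h @^-1: setX C1 C2|.

Lemma part_card_le j :
  n j <= #|B1 j| * #|B2 j| + #|B1 j| * #|C2| + #|B2 j| * #|C1| + corner_count j.
Proof.
rewrite -card_part -(cardsID (h @^-1: setX C1 C2)) addnC leq_add2r.
apply: leq_trans (card_setXU_corner (B1 j) C1 (B2 j) C2).
apply: leq_trans (card_preimset_le _ h_inj); apply: subset_leq_card.
apply/subsetP => u; rewrite !inE => /andP[notC /eqP <-].
by move: (h_mem u); rewrite notC !inE.
Qed.

Lemma sum_corner_count_le : \sum_(j < d) corner_count j <= #|C1| * #|C2|.
Proof. by rewrite sum_card_part -cardsX card_preimset_le. Qed.

End CornerCount.

Theorem mainTheorem3 (d : nat) (n : 'I_d -> nat)
    (T1 : finType) (e1 : rel T1) (T2 : finType) (e2 : rel T2) :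
  2 <= d -> (forall j, 1 <= n j) ->
  simple_graph e1 -> simple_graph e2 ->
  subgraph_iso (@Kmp_adj d n) (strong_prod e1 e2) <->
  exists (a b z : 'I_d -> nat) (x y : nat),
    [/\ subgraph_iso (@Kmpx_adj d a x) e1,
        subgraph_iso (@Kmpx_adj d b y) e2,
        (forall j, n j <= a j * b j + a j * y + b j * x + z j) &
        \sum_(j < d) z j <= x * y].
Proof.
move=> _ _ _ _; split.
- case=> h [h_inj h_adj].
  pose pi1 u := (h u).1; pose pi2 u := (h u).2.
  have joined1 u v : tag u != tag v -> joined e1 (pi1 u) (pi1 v).
    by move/h_adj; rewrite strong_prodE => /and3P[].
  have joined2 u v : tag u != tag v -> joined e2 (pi2 u) (pi2 v).
    by move/h_adj; rewrite strong_prodE => /and3P[].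
  have h_mem u : h u \in setX (own_img pi1 (tag u) :|: shared_img pi1)
                              (own_img pi2 (tag u) :|: shared_img pi2).
    by rewrite [h u]surjective_pairing; apply/setXP; split; apply: proj_mem.
  exists (fun j => #|own_img pi1 j|), (fun j => #|own_img pi2 j|),
    (corner_count h (shared_img pi1) (shared_img pi2)),
    #|shared_img pi1|, #|shared_img pi2|.
  split; [exact: Kmpx_sub_projection joined1 | exact: Kmpx_sub_projection joined2 |
          exact: part_card_le h_mem | exact: sum_corner_count_le].
- case=> a [b [z [x [y [sub1 sub2 n_le sum_z_le]]]]].
  apply: subgraph_iso_trans (Kmp_sub_strong_prod_Kmpx n_le sum_z_le) _.
  exact: strong_prod_subgraph_iso.
Qed.
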